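(* Let $X$ be a set, $B=(B,+,0)$ a unitary magma and $(A,k,q,s,p)$ a retraction point from $X$ to $B$. Then the map $\langle q,p\rangle\colon A\to X\times B$, $a\mapsto(q(a),p(a))$, is a bijection if and only if $q(k(x)+s(b))=x$ for all $x\in X$ and $b\in B$.
   Context: A unitary magma is a set with a binary operation $+$ and an element $0$ with $b+0=b=0+b$ for all $b$; morphisms preserve $+$ and $0$. Given a set $X$ and a unitary magma $B$, a retraction point from $X$ to $B$ is a tuple $(A,k,q,s,p)$ where $A=(A,+,0)$ is a unitary magma, $k\colon X\to A$ and $q\colon A\to X$ are maps, $s\colon B\to A$ and $p\colon A\to B$ are morphisms of unitary magmas, and $p(s(b))=b$, $q(k(x))=x$, $p(k(x))=0$, $q(s(b))=q(0)$, and $k(q(a))+s(p(a))=a$ for all $x\in X$, $b\in B$, $a\in A$. *)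

Record UnitaryMagma := {
  um_carrier :> Type;
  um_op : um_carrier -> um_carrier -> um_carrier;
  um_zero : um_carrier;
  um_op_zero_r : forall b, um_op b um_zero = b;
  um_zero_op_l : forall b, um_op um_zero b = b
}.

Arguments um_op {_} _ _.
Arguments um_zero {_}.

Definition is_um_morphism (M N : UnitaryMagma) (f : M -> N) : Prop :=
  (forall a b, f (um_op a b) = um_op (f a) (f b)) /\ f um_zero = um_zero.

Definition is_retraction_point (X : Type) (B A : UnitaryMagma)
  (k : X -> A) (q : A -> X) (s : B -> A) (p : A -> B) : Prop :=
  is_um_morphism B A s /\ is_um_morphism A B p /\
  (forall b, p (s b) = b) /\
  (forall x, q (k x) = x) /\
  (forall x, p (k x) = um_zero) /\
  (forall b, q (s b) = q um_zero) /\
  (forall a, um_op (k (q a)) (s (p a)) = a).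

Definition bijective_map {U V : Type} (f : U -> V) : Prop :=
  (forall u1 u2, f u1 = f u2 -> u1 = u2) /\ (forall v, exists u, f u = v).

(* The map (x, b) |-> k x + s b is always a left inverse of <q, p>, by the
   decomposition axiom, and <q, p> of it is (x, b) |-> (q (k x + s b), b)
   because p is a morphism killing k and retracting s.  A map with a left
   inverse is bijective exactly when that left inverse is also a right
   inverse, which here is the stated identity. *)

Lemma bijective_map_iff_cancel_r {U V : Type} (f : U -> V) (g : V -> U) :
  (forall u, g (f u) = u) ->
  (bijective_map f <-> forall v, f (g v) = v).
Proof.
  intros gK. split.
  - intros [_ f_surj] v. destruct (f_surj v) as [u <-]. now rewrite gK.
  - intros fK. split.
    + intros u1 u2 E. now rewrite <- (gK u1), <- (gK u2), E.
    + intros v. now exists (g v).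
Qed.

Lemma um_morphism_sum_retract (X : Type) (B A : UnitaryMagma)
  (k : X -> A) (s : B -> A) (p : A -> B) :
  is_um_morphism A B p -> (forall b, p (s b) = b) ->
  (forall x, p (k x) = um_zero) ->
  forall x b, p (um_op (k x) (s b)) = b.
Proof.
  intros [p_op _] ps pk x b.
  now rewrite p_op, pk, ps, um_zero_op_l.
Qed.

Theorem proposition2p2 (X : Type) (B A : UnitaryMagma)
  (k : X -> A) (q : A -> X) (s : B -> A) (p : A -> B) :
  is_retraction_point X B A k q s p ->
  (bijective_map (fun a : A => (q a, p a)) <->
   (forall (x : X) (b : B), q (um_op (k x) (s b)) = x)).
Proof.
  intros [_ [p_morph [ps [_ [pk [_ decomp]]]]]].
  set (sum := fun xb : X * B => um_op (k (fst xb)) (s (snd xb))).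
  apply (iff_trans (bijective_map_iff_cancel_r (fun a => (q a, p a)) sum decomp)).
  pose proof (um_morphism_sum_retract X B A k s p p_morph ps pk) as p_sum.
  split.
  - intros H x b. specialize (H (x, b)). unfold sum in H; simpl in H. now injection H.
  - intros H [x b]. unfold sum; simpl. now rewrite H, p_sum.
Qed.
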